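(* Let $\mathcal{X}$ be a totally ordered set equipped with a $\sigma$-algebra $\mathcal{F}$, let $n\ge 1$, and let $\mathcal{S}_{n,\bm{\nu}}$ be the set of labelings $\sigma:\{1,\dots,n\}\to\{1,\dots,K\}$ with $|\sigma^{-1}(k)|=n\nu_k$ for each $k$, for a fixed vector of group proportions $\bm{\nu}=(\nu_1,\dots,\nu_K)$. For $\theta\in\{0,1\}$ and $k\in\{1,\dots,K\}$ let $P_{\theta,k}$ be probability measures on $(\mathcal{X},\mathcal{F})$, and for $\sigma\in\mathcal{S}_{n,\bm{\nu}}$ let $\mathbb{P}_{\theta;\sigma}=\bigotimes_{i=1}^n P_{\theta,\sigma(i)}$ on $(\mathcal{X}^n,\mathcal{F}^{\otimes n})$. For a measurable test $\phi:\mathcal{X}^n\to[0,1]$ define $\mathsf{P_F}(\phi)=\max_{\sigma\in\mathcal{S}_{n,\bm{\nu}}}\mathbb{E}_{\mathbb{P}_{0;\sigma}}[\phi(X^n)]$ and $\mathsf{P_M}(\phi)=\max_{\sigma\in\mathcal{S}_{n,\bm{\nu}}}\mathbb{E}_{\mathbb{P}_{1;\sigma}}[1-\phi(X^n)]$. Then for any measurable test $\psi:\mathcal{X}^n\to[0,1]$ there exists a symmetric test $\phi$ such that $\mathsf{P_F}(\phi)\le\mathsf{P_F}(\psi)$ and $\mathsf{P_M}(\phi)\le\mathsf{P_M}(\psi)$.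
   Context: The ordering map $\Pi:\mathcal{X}^n\to\tilde{\mathcal{X}}^n$, where $\tilde{\mathcal{X}}^n=\{x^n\in\mathcal{X}^n: x_1\ge x_2\ge\dots\ge x_n\}$ with $\sigma$-algebra $\tilde{\mathcal{F}}=\mathcal{F}^{\otimes n}\cap\tilde{\mathcal{X}}^n$, sends $x^n$ to the rearrangement of its coordinates in non-increasing order. A test $\phi:\mathcal{X}^n\to[0,1]$ is called symmetric if $\phi=\tilde{\phi}\circ\Pi$ for some $\tilde{\mathcal{F}}$-measurable $\tilde{\phi}:\tilde{\mathcal{X}}^n\to[0,1]$. The $\sigma$-algebra $\mathcal{F}^{\otimes n}$ is assumed closed under coordinate permutations: for every $\mathcal{A}\in\mathcal{F}^{\otimes n}$ and every permutation $\tau$ of $\{1,\dots,n\}$, $\{(x_{\tau(1)},\dots,x_{\tau(n)}): x^n\in\mathcal{A}\}\in\mathcal{F}^{\otimes n}$. *)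

From HB Require Import structures.
From mathcomp Require Import all_boot all_order all_algebra.
From mathcomp Require Import all_classical all_reals all_analysis.
Set Implicit Arguments. Unset Strict Implicit. Unset Printing Implicit Defensive.
Import Order.TTheory GRing.Theory Num.Theory.
Local Open Scope classical_set_scope.
Local Open Scope ring_scope.

(* X^n is modelled by n.-tuple T, whose canonical sigma-algebra in
   MathComp-Analysis is the product sigma-algebra F^{(x)n} (generated by the
   coordinate projections). *)

Section Defs.
Context {d : measure_display} {T : measurableType d} {R : realType}.

Definition geR (le : rel T) : rel T := fun a b => le b a.

Definition total_order (le : rel T) : Prop :=
  [/\ reflexive le, antisymmetric le, transitive le & total le].

Definition order_map (le : rel T) (n : nat) (x : n.-tuple T) : n.-tuple T :=
  @Tuple n T (sort (geR le) x)
    (introT eqP (etrans (size_sort (geR le) x) (size_tuple x))).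

Definition ordered_tuples (le : rel T) (n : nat) : set (n.-tuple T) :=
  [set x | sorted (geR le) x].

Definition trace_measurable n (D : set (n.-tuple T)) (f : n.-tuple T -> R) :=
  forall B : set R, measurable B ->
    exists A : set (n.-tuple T), measurable A /\ D `&` f @^-1` B = D `&` A.

Definition is_test n (phi : n.-tuple T -> R) : Prop :=
  measurable_fun [set: n.-tuple T] phi /\ forall x, 0 <= phi x <= 1.

Definition symmetric_test (le : rel T) n (phi : n.-tuple T -> R) : Prop :=
  exists phit : n.-tuple T -> R,
    [/\ trace_measurable (@ordered_tuples le n) phit,
        (forall x, @ordered_tuples le n x -> 0 <= phit x <= 1) &
        phi = (fun x => phit (order_map le x))].

(* mu is the product measure (x)_{i} Ps i on (X^n, F^{(x)n}):
   its value on measurable rectangles is the product of the marginals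
   (this determines it uniquely). *)
Definition is_product_measure n (mu : probability (n.-tuple T) R)
    (Ps : 'I_n -> probability T R) : Prop :=
  forall A : 'I_n -> set T, (forall i, measurable (A i)) ->
    mu [set x | forall i, A i (tnth x i)] = (\prod_(i < n) Ps i (A i))%E.

End Defs.

Definition labeling {R : realType} n K (nu : 'I_K -> R)
    (s : {ffun 'I_n -> 'I_K}) : bool :=
  [forall k, #|[set i | s i == k]|%:R == n%:R * nu k].

Definition PF {d} {T : measurableType d} {R : realType} n K (nu : 'I_K -> R)
  (Pn : bool -> {ffun 'I_n -> 'I_K} -> probability (n.-tuple T) R)
  (phi : n.-tuple T -> R) : \bar R :=
  \big[Order.max/-oo%E]_(s | labeling nu s) (\int[Pn false s]_x (phi x)%:E)%E.

Definition PM {d} {T : measurableType d} {R : realType} n K (nu : 'I_K -> R)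
  (Pn : bool -> {ffun 'I_n -> 'I_K} -> probability (n.-tuple T) R)
  (phi : n.-tuple T -> R) : \bar R :=
  \big[Order.max/-oo%E]_(s | labeling nu s) (\int[Pn true s]_x (1 - phi x)%:E)%E.

(* Averaging a test over the n! permutations of the coordinates yields a
   permutation-invariant test, which therefore factors through the ordering
   map.  A coordinate permutation s carries the product measure P_{th;sigma}
   to P_{th;sigma o s}, and sigma o s is again a labeling with the same group
   sizes.  So the risk of the averaged test under any labeling is a mean of
   risks of the original test under other labelings, hence at most their
   maximum. *)

From HB Require Import structures.
From mathcomp Require Import all_boot all_order all_algebra all_fingroup.
From mathcomp Require Import all_classical all_reals all_analysis.
From mathcomp Require Import measurable_realfun.
Import Order.TTheory GRing.Theory Num.Theory.
Local Open Scope classical_set_scope.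
Local Open Scope ring_scope.

Definition permute_tuple {T : Type} {n : nat} (s : 'S_n) (x : n.-tuple T) :
  n.-tuple T := [tuple tnth x (s i) | i < n].

Lemma permute_tupleM {T : Type} {n : nat} (s t : 'S_n) (x : n.-tuple T) :
  permute_tuple s (permute_tuple t x) = permute_tuple (s * t)%g x.
Proof. by apply: eq_from_tnth => i; rewrite !tnth_mktuple permM. Qed.

Lemma perm_eq_permute_tuple {T : eqType} {n : nat} (x y : n.-tuple T) :
  perm_eq y x -> exists s : 'S_n, y = permute_tuple s x.
Proof. by case/tuple_permP => s ys; exists s; apply: val_inj. Qed.

Lemma order_mapE {d} {T : measurableType d} (le : rel T) {n : nat}
  (x : n.-tuple T) :
  exists s : 'S_n, order_map le x = permute_tuple s x.
Proof. by apply: perm_eq_permute_tuple; rewrite perm_sort. Qed.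

Lemma measurable_permute_tuple {d} {T : measurableType d} {n : nat} (s : 'S_n) :
  measurable_fun setT (@permute_tuple T n s).
Proof.
apply/measurable_fun_tnthP => i.
rewrite (_ : _ \o _ = (@tnth n T)^~ (s i)); first exact: measurable_tnth.
by apply: funext => x /=; rewrite tnth_mktuple.
Qed.

HB.instance Definition _ {d} {T : measurableType d} {n : nat} (s : 'S_n) :=
  isMeasurableFun.Build _ _ _ _ (@permute_tuple T n s)
  (measurable_permute_tuple s).

Section Symmetrize.
Context {T : Type} {R : numFieldType} {n : nat}.
Implicit Types (f g : n.-tuple T -> R) (x : n.-tuple T).

Definition symmetrize f x : R :=
  (n`!%:R)^-1 * \sum_(s : 'S_n) f (permute_tuple s x).

Lemma symmetrize_permute_tuple f (t : 'S_n) x :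
  symmetrize f (permute_tuple t x) = symmetrize f x.
Proof.
congr (_ * _); rewrite [RHS](reindex_inj (mulIg t)) /=.
by apply: eq_bigr => s _; rewrite permute_tupleM.
Qed.

Lemma symmetrize_cst (c : R) x : symmetrize (fun=> c) x = c.
Proof.
by rewrite /symmetrize sumr_const card_Sn -(mulr_natr c) mulrCA mulVf ?mulr1.
Qed.

Lemma symmetrizeB f g x :
  symmetrize (fun y => f y - g y) x = symmetrize f x - symmetrize g x.
Proof. by rewrite /symmetrize sumrB mulrBr. Qed.

Lemma ler_symmetrize f g x : (forall y, f y <= g y) ->
  symmetrize f x <= symmetrize g x.
Proof.
move=> fg; rewrite ler_wpM2l ?invr_ge0 ?ler0n //.
by apply: ler_sum => s _; exact: fg.
Qed.

End Symmetrize.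

Lemma symmetrize_order_map {d} {T : measurableType d} {R : numFieldType}
  (le : rel T) {n : nat} (f : n.-tuple T -> R) x :
  symmetrize f (order_map le x) = symmetrize f x.
Proof. by have [s ->] := order_mapE le x; exact: symmetrize_permute_tuple. Qed.

Lemma measurable_symmetrize {d} {T : measurableType d} {R : realType} {n : nat}
  (f : n.-tuple T -> R) :
  measurable_fun setT f -> measurable_fun setT (symmetrize f).
Proof.
move=> mf; apply: measurable_funM; first exact: measurable_cst.
apply: measurable_sum => s.
exact: measurableT_comp mf (measurable_permute_tuple s).
Qed.

Lemma trace_measurableW {d} {T : measurableType d} {R : realType} {n : nat}
  (D : set (n.-tuple T)) (f : n.-tuple T -> R) :
  measurable_fun setT f -> trace_measurable D f.
Proof.
move=> mf B mB; exists (f @^-1` B); split => //.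
by rewrite -[X in measurable X]setTI; exact: mf.
Qed.

Section Rectangles.
Context {d} {T : measurableType d} {n : nat}.

Definition rectangle (A : 'I_n -> set T) : set (n.-tuple T) :=
  [set x | forall i, A i (tnth x i)].

Definition rectangles : set (set (n.-tuple T)) :=
  [set rectangle A | A in [set A | forall i, measurable (A i)]].

Lemma rectangle_measurable (A : 'I_n -> set T) :
  (forall i, measurable (A i)) -> measurable (rectangle A).
Proof.
move=> mA.
rewrite (_ : rectangle A = \big[setI/setT]_(i < n) ((@tnth n T)^~ i @^-1` A i)).
  apply: bigsetI_measurable => i _.
  by rewrite -[X in measurable X]setTI; exact: measurable_tnth.
apply/seteqP; split => x; rewrite -bigcap_seq.
  by move=> Ax i _; exact: Ax.
by move=> Ax i; apply: Ax; exact: mem_index_enum.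
Qed.

Lemma rectangles_measurable : rectangles `<=` measurable.
Proof. by move=> _ [A mA <-]; exact: rectangle_measurable. Qed.

Lemma rectangles_setI_closed : setI_closed rectangles.
Proof.
move=> _ _ [A mA <-] [B mB <-]; exists (fun i => A i `&` B i).
  by move=> i; exact: measurableI.
apply/seteqP; split => x /= H.
  by split => i; have [] := H i.
by move=> i; split; [exact: H.1 | exact: H.2].
Qed.

Lemma measurable_g_sigma_rectangles : measurable `<=` <<s rectangles >>.
Proof.
apply: smallest_sub; first exact: smallest_sigma_algebra.
move=> B; rewrite -bigcup_seq => -[i _ [A mA <-]].
apply: sub_sigma_algebra; exists (fun j => if j == i then A else setT).
  by move=> j /=; case: ifP.
apply/seteqP; split => x /=.
  by move=> H; split => //; have := H i; rewrite eqxx.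
by move=> [_ Ax] j; case: ifP => // /eqP ->.
Qed.

Lemma preimage_permute_rectangle (s : 'S_n) (A : 'I_n -> set T) :
  permute_tuple s @^-1` rectangle A = rectangle (fun j => A (s^-1 j)%g).
Proof.
apply/seteqP; split => x /= H j.
  by have := H (s^-1 j)%g; rewrite tnth_mktuple permKV.
by rewrite tnth_mktuple; have := H (s j); rewrite permK.
Qed.

End Rectangles.

Section ProductMeasure.
Context {d} {T : measurableType d} {R : realType} {n : nat}.
Implicit Types (mu nu : probability (n.-tuple T) R)
  (Ps : 'I_n -> probability T R).

Lemma product_measure_unique {mu nu Ps} A :
  is_product_measure mu Ps -> is_product_measure nu Ps ->
  measurable A -> mu A = nu A.
Proof.
move=> muPs nuPs /measurable_g_sigma_rectangles.
apply: (g_sigma_algebra_measure_unique _ (@rectangles_measurable _ _ n)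
  (fun=> setT)).
- by move=> _; exists (fun=> setT) => //; apply/seteqP; split.
- by apply/seteqP; split => // x _; exists 0%N.
- exact: rectangles_setI_closed.
- by move=> _ [B mB <-]; exact: etrans (muPs _ mB) (esym (nuPs _ mB)).
- by move=> _; apply: (le_lt_trans (probability_le1 _ measurableT)); rewrite ltry.
Qed.

Lemma is_product_measure_permute {mu Ps} (s : 'S_n) : is_product_measure mu Ps ->
  is_product_measure (distribution mu (permute_tuple s)) (fun i => Ps (s i)).
Proof.
move=> muPs A mA.
transitivity (\prod_(j < n) Ps j (A (s^-1 j)%g))%E.
  apply: etrans (congr1 mu (preimage_permute_rectangle s A)) _.
  exact: muPs.
by rewrite (reindex_inj (@perm_inj _ s)) /=; apply: eq_bigr => i _; rewrite permK.
Qed.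

Lemma ge0_integral_permute_tuple {mu nu Ps} (s : 'S_n) (h : n.-tuple T -> R) :
  is_product_measure mu Ps -> is_product_measure nu (fun i => Ps (s i)) ->
  measurable_fun setT h -> (forall x, 0 <= h x) ->
  (\int[mu]_x (h (permute_tuple s x))%:E = \int[nu]_x (h x)%:E)%E.
Proof.
move=> muPs nuPs mh h0.
have mEh : measurable_fun setT (EFin \o h) by exact/measurable_EFinP.
rewrite -(ge0_integral_distribution _ mEh) => [|x]; last by rewrite lee_fin.
apply: eq_measure_integral => A mA _.
exact: product_measure_unique (is_product_measure_permute s muPs) nuPs mA.
Qed.

End ProductMeasure.

Lemma mean_le_ub {R : realFieldType} {I : finType} (a : I -> \bar R)
  (M : \bar R) :
  (0 < #|I|)%N -> (forall i, (a i <= M)%E) ->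
  ((#|I|%:R)^-1%:E * \sum_i a i <= M)%E.
Proof.
move=> I0 aM; have I0R : (#|I|%:R : R) != 0 by rewrite pnatr_eq0 -lt0n.
apply: (@le_trans _ _ ((#|I|%:R)^-1%:E * (#|I|%:R%:E * M))%E).
  apply: lee_wpmul2l; first by rewrite lee_fin invr_ge0 ler0n.
  rewrite mule_natl; apply: le_trans (lee_sum _ (fun i _ => aM i)) _.
  by rewrite sumr_const.
by rewrite muleA -EFinM mulVf // mul1e.
Qed.

Lemma ge0_integral_symmetrize {d} {T : measurableType d} {R : realType} {n : nat}
  {mu : probability (n.-tuple T) R} {Ps : 'I_n -> probability T R}
  {mus : 'S_n -> probability (n.-tuple T) R} (h : n.-tuple T -> R) :
  is_product_measure mu Ps ->
  (forall s, is_product_measure (mus s) (fun i => Ps (s i))) ->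
  measurable_fun setT h -> (forall x, 0 <= h x) ->
  (\int[mu]_x (symmetrize h x)%:E =
     (n`!%:R)^-1%:E * \sum_(s : 'S_n) \int[mus s]_x (h x)%:E)%E.
Proof.
move=> muPs musPs mh h0.
have mhs (s : 'S_n) : measurable_fun setT (fun x => (h (permute_tuple s x))%:E).
  apply/measurable_EFinP.
  exact: measurableT_comp mh (measurable_permute_tuple s).
under eq_integral => x _ do rewrite EFinM -sumEFin.
rewrite ge0_integralZl_EFin ?invr_ge0 ?ler0n //; last first.
- exact: emeasurable_sum.
- by move=> x _; apply: sume_ge0 => s _; rewrite lee_fin.
rewrite ge0_integral_sum // => [|s x _]; last by rewrite lee_fin.
congr (_ * _)%E; apply: eq_bigr => s _.
exact: ge0_integral_permute_tuple s h muPs (musPs s) mh h0.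
Qed.

Lemma card_set_pred {I : finType} (P : pred I) : #|[set i | P i]| = #|P|.
Proof. by apply: eq_card => i; rewrite /in_mem /mem /= /in_set asboolb. Qed.

Lemma labeling_permute {R : realType} {n K : nat} (nu : 'I_K -> R)
  (sigma : {ffun 'I_n -> 'I_K}) (s : 'S_n) :
  labeling nu sigma -> labeling nu [ffun i => sigma (s i)].
Proof.
move=> /forallP lsigma; apply/forallP => k; rewrite -(eqP (lsigma k)).
rewrite !(card_set_pred (fun i => _ == k)); apply/eqP; congr (_%:R).
rewrite -!sum1_card [RHS](reindex_inj (@perm_inj _ s)).
by apply: eq_bigl => i; rewrite !unfold_in /= ffunE.
Qed.

Section LabeledRisk.
Context {d} {T : measurableType d} {R : realType} {n K : nat}.
Variables (Ps : 'I_K -> probability T R)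
  (Pn : {ffun 'I_n -> 'I_K} -> probability (n.-tuple T) R)
  (L : pred {ffun 'I_n -> 'I_K}).
Hypothesis Pn_product :
  forall sigma, L sigma -> is_product_measure (Pn sigma) (fun i => Ps (sigma i)).
Hypothesis L_permute :
  forall sigma (s : 'S_n), L sigma -> L [ffun i => sigma (s i)].

Lemma integral_symmetrize_le_bigmax (h : n.-tuple T -> R) sigma :
  measurable_fun setT h -> (forall x, 0 <= h x) -> L sigma ->
  (\int[Pn sigma]_x (symmetrize h x)%:E <=
     \big[Order.max/-oo]_(tau | L tau) \int[Pn tau]_x (h x)%:E)%E.
Proof.
move=> mh h0 Lsigma.
have Pn_permute (s : 'S_n) :
    is_product_measure (Pn [ffun i => sigma (s i)]) (fun i => Ps (sigma (s i))).
  move=> A mA; rewrite (Pn_product _ (L_permute _ s Lsigma)) //.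
  by apply: eq_bigr => i _; rewrite ffunE.
rewrite (ge0_integral_symmetrize h (Pn_product _ Lsigma) Pn_permute) // -card_Sn.
apply: mean_le_ub => [|s]; first by rewrite card_Sn fact_gt0.
exact: le_bigmax_cond (L_permute _ s Lsigma).
Qed.

End LabeledRisk.

Theorem lemma2 (d : measure_display) (T : measurableType d) (le : rel T)
  (R : realType) (n K : nat) (nu : 'I_K -> R)
  (P : bool -> 'I_K -> probability T R)
  (Pn : bool -> {ffun 'I_n -> 'I_K} -> probability (n.-tuple T) R) :
  total_order le ->
  (1 <= n)%N ->
  (forall (th : bool) (s : {ffun 'I_n -> 'I_K}),
      labeling nu s -> is_product_measure (Pn th s) (fun i => P th (s i))) ->
  forall psi : n.-tuple T -> R, is_test psi ->
  exists phi : n.-tuple T -> R,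
    [/\ is_test phi, symmetric_test le phi,
        (PF nu Pn phi <= PF nu Pn psi)%E & (PM nu Pn phi <= PM nu Pn psi)%E].
Proof.
move=> _ _ Pn_product psi [mpsi psi01].
have msym := measurable_symmetrize psi mpsi.
have sym01 x : 0 <= symmetrize psi x <= 1.
  rewrite -{1}(symmetrize_cst 0 x) -(symmetrize_cst 1 x).
  by rewrite !ler_symmetrize // => y; case/andP: (psi01 y).
have risk_le th (h : n.-tuple T -> R) sigma :
    measurable_fun setT h -> (forall x, 0 <= h x) -> labeling nu sigma ->
    (\int[Pn th sigma]_x (symmetrize h x)%:E <=
       \big[Order.max/-oo]_(tau | labeling nu tau) \int[Pn th tau]_x (h x)%:E)%E.
  apply: (integral_symmetrize_le_bigmax _ _ _ (Pn_product th)) => tau s.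
  exact: labeling_permute.
exists (symmetrize psi); split.
- by split.
- exists (symmetrize psi); split => //.
    exact: trace_measurableW.
  by apply: funext => x; rewrite symmetrize_order_map.
- apply: bigmax_le => [|sigma Lsigma]; first exact: leNye.
  by apply: risk_le => // x; case/andP: (psi01 x).
- apply: bigmax_le => [|sigma Lsigma]; first exact: leNye.
  under eq_integral => x _ do rewrite -(symmetrize_cst 1 x) -symmetrizeB.
  apply: risk_le => //; first exact: measurable_funB.
  by move=> x; rewrite subr_ge0; case/andP: (psi01 x).
Qed.
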